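(* Let $n$ and $\ell$ be even positive integers. Then \[\max(n,\ell)\ge \binom{n}{2}-\left(\frac{n}{2}+k\right),\] where $k$ is the smallest nonnegative integer such that $\gcd(n-2k-1,\ell)=1$.
   Context: All graphs are finite and simple. Vertex labels lie in $\mathbb{Z}_\ell$ ($\ell\ge 2$). In the neighborhood Lights Out game on $G$, toggling a vertex $v$ adds $1$ (mod $\ell$) to the label of each vertex of the closed neighborhood $N[v]$; the game is won when all labels are $0$. $G$ is $N$-AW if the game can be won from every initial labeling. $\max(n,\ell)$ is the maximum number of edges of an $N$-AW graph on $n$ vertices. *)

From mathcomp Require Import all_boot all_order all_algebra.
Set Implicit Arguments. Unset Strict Implicit. Unset Printing Implicit Defensive.

Definition simple_graph (n : nat) (E : {set {set 'I_n}}) : bool :=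
  [forall e in E, #|e| == 2].

Definition in_closed_nbhd (n : nat) (E : {set {set 'I_n}}) (v u : 'I_n) : bool :=
  (u == v) || ([set u; v] \in E).

(* Labels live in Z_l, represented by 'I_l (residues 0..l-1).  Toggling v
   s times adds s (mod l) to every vertex of N[v]; since only the number of
   toggles mod l matters, toggle counts are taken in 'I_l as well. *)
Definition wins (n l : nat) (E : {set {set 'I_n}})
    (f t : {ffun 'I_n -> 'I_l}) : bool :=
  [forall u : 'I_n,
     (f u + \sum_(v : 'I_n) t v * in_closed_nbhd E v u) %% l == 0].

Definition N_AW (n l : nat) (E : {set {set 'I_n}}) : bool :=
  [forall f : {ffun 'I_n -> 'I_l}, exists t : {ffun 'I_n -> 'I_l}, wins E f t].

Definition maxNAW (n l : nat) : nat :=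
  \max_(E : {set {set 'I_n}} | simple_graph E && N_AW l E) #|E|.

(* Write n = 2h and delete from K_n the perfect matching {a, a + h} and the k
   edges {0, b}, 1 <= b <= k: at least C(n, 2) - (h + k) edges remain.  The
   closed-neighbourhood matrix of this graph is J - A, with A the adjacency
   matrix of the deleted edges, so a toggle vector x killed by it over Z_l
   satisfies A x = S 1 with S = sum x.  Read row by row, this equation gives
   every x_v in terms of S, and summing the values yields (n - 2k - 1) S = 0.
   As n - 2k - 1 is a unit mod l, S = 0 and then x = 0: the toggle map is
   injective, hence bijective on the finite set of labelings, and the graph
   is N-AW.  The minimality of k is only used to get k < h. *)

From mathcomp Require Import all_boot all_order all_algebra zify.
Set Implicit Arguments. Unset Strict Implicit. Unset Printing Implicit Defensive.
Import GRing.Theory.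

Section ComplementGraph.
Variables (T : finType) (R : rel T).
Hypothesis R_sym : symmetric R.

Definition complement_graph : {set {set T}} :=
  [set e | [exists u, exists v, [&& u != v, ~~ R u v & e == [set u; v]]]].

Lemma complement_graph_card2 e : e \in complement_graph -> #|e| = 2.
Proof.
by rewrite inE => /existsP[u /existsP[v /and3P[uv _ /eqP->]]]; rewrite cards2 uv.
Qed.

Lemma mem_complement_graph u v :
  u != v -> ([set u; v] \in complement_graph) = ~~ R u v.
Proof.
move=> uv; apply/idP/idP => [|nRuv]; last first.
  by rewrite inE; apply/existsP; exists u; apply/existsP; exists v; rewrite uv nRuv eqxx.
rewrite inE => /existsP[u' /existsP[v' /and3P[_ nR' /eqP e]]].
have : v \in [set u'; v'] by rewrite -e set22.
have : u \in [set u'; v'] by rewrite -e set21.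
rewrite !inE => /orP[]/eqP eu /orP[]/eqP ev; move: uv nR'; rewrite eu ev ?eqxx //= => _.
by rewrite R_sym.
Qed.

Lemma card_complement_graph (F : {set {set T}}) :
  (forall u v, u != v -> R u v -> [set u; v] \in F) ->
  'C(#|T|, 2) - #|F| <= #|complement_graph|.
Proof.
move=> RF; pose D := [set e : {set T} | #|e| == 2].
have DF_sub : D :\: F \subset complement_graph.
  apply/subsetP => e; rewrite in_setD inE => /andP[eF /cards2P[u [v [uv e_uv]]]].
  by move: eF; rewrite e_uv mem_complement_graph //; apply: contraNN; apply: RF.
apply: leq_trans (subset_leq_card DF_sub).
by rewrite cardsD card_draws leq_sub2l // subset_leq_card // subsetIr.
Qed.

End ComplementGraph.

Lemma simple_complement_graph n (R : rel 'I_n) : simple_graph (complement_graph R).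
Proof. by apply/forall_inP => e /complement_graph_card2->. Qed.

Lemma closed_nbhd_complement_graph n (R : rel 'I_n) u v :
  symmetric R -> irreflexive R -> in_closed_nbhd (complement_graph R) v u = ~~ R u v.
Proof.
move=> R_sym R_irr; rewrite /in_closed_nbhd.
by case: eqVneq => [->|uv]; rewrite ?R_irr // (mem_complement_graph R_sym uv).
Qed.

Section Toggle.
Variables (n p : nat) (E : {set {set 'I_n}}).
Local Open Scope ring_scope.

(* ['Z_p.+2] is convertible to ['I_p.+2], so labelings and toggle vectors are
   read in the ring Z_l directly. *)
Definition toggle (t : {ffun 'I_n -> 'Z_p.+2}) : {ffun 'I_n -> 'Z_p.+2} :=
  [ffun u => \sum_v t v * (in_closed_nbhd E v u)%:R].

Lemma toggleB t1 t2 : toggle (t1 - t2) = toggle t1 - toggle t2.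
Proof.
apply/ffunP => u; rewrite !ffunE -sumrB.
by apply: eq_bigr => v _; rewrite !ffunE mulrBl.
Qed.

Lemma wins_toggle (f t : {ffun 'I_n -> 'I_p.+2}) :
  toggle t = [ffun u => - (f u : 'Z_p.+2)] -> wins E f t.
Proof.
move=> tf; apply/forallP => u.
have /(congr1 val) : ((f u + \sum_v t v * in_closed_nbhd E v u)%:R = 0 :> 'Z_p.+2).
  rewrite natrD natr_Zp natr_sum.
  under eq_bigr do rewrite natrM natr_Zp.
  by move/ffunP/(_ u): tf; rewrite !ffunE => ->; rewrite subrr.
by rewrite Zp_nat => /= ->.
Qed.

Lemma N_AW_of_toggle_kernel :
  (forall t, toggle t = 0 -> t = 0) -> N_AW p.+2 E.
Proof.
move=> ker0; have toggle_inj : injective toggle.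
  by move=> t1 t2 /eqP; rewrite -subr_eq0 -toggleB => /eqP/ker0/eqP; rewrite subr_eq0 => /eqP.
have [untoggle _ untoggleK] := injF_bij toggle_inj.
apply/forallP => f; apply/existsP; exists (untoggle [ffun u => - (f u : 'Z_p.+2)]).
exact/wins_toggle/untoggleK.
Qed.

End Toggle.

Lemma sum_mul_indicator (R : pzSemiRingType) (I : Type) (r : seq I) (P : pred I)
    (x : I -> R) :
  (\sum_(i <- r) x i * (P i)%:R = \sum_(i <- r | P i) x i)%R.
Proof.
by rewrite [RHS]big_mkcond; apply: eq_bigr => i _; case: (P i); rewrite ?mulr1 ?mulr0.
Qed.

Lemma sum_mul_negb (R : pzRingType) (I : Type) (r : seq I) (P : pred I)
    (x : I -> R) :
  (\sum_(i <- r) x i * (~~ P i)%:R = \sum_(i <- r) x i - \sum_(i <- r) x i * (P i)%:R)%R.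
Proof.
by rewrite -sumrB; apply: eq_bigr => i _; case: (P i); rewrite ?mulr1 ?mulr0 ?subr0 ?subrr.
Qed.

Lemma sum_nat_indicator (R : pzSemiRingType) (n : nat) (P : pred nat) (x : nat -> R)
    (s : seq nat) :
  uniq s -> s =i [pred i | (i < n) && P i] ->
  (\sum_(0 <= i < n) x i * (P i)%:R = \sum_(i <- s) x i)%R.
Proof.
move=> s_uniq s_enum; rewrite sum_mul_indicator -big_filter; apply/perm_big/uniq_perm => //.
  exact/filter_uniq/iota_uniq.
by move=> i; rewrite mem_filter mem_index_iota s_enum inE andbC.
Qed.

Definition matching_star (h k a b : nat) : bool :=
  [|| a + h == b, b + h == a, (a == 0) && (0 < b <= k) | (b == 0) && (0 < a <= k)].

Section MatchingStarKernel.
Local Open Scope ring_scope.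
Variables (R : unitRingType) (h k : nat) (x : nat -> R).
Hypothesis k_lt_h : (k < h)%N.
Local Notation S := (\sum_(0 <= v < h + h) x v).
Hypothesis x_nbhd : forall u, (u < h + h)%N ->
  \sum_(0 <= v < h + h) x v * (matching_star h k u v)%:R = S.

Let sum_nbhd u s : (u < h + h)%N -> uniq s ->
  s =i [pred v | (v < h + h)%N && matching_star h k u v] -> \sum_(v <- s) x v = S.
Proof. by move=> u_lt s_uniq s_enum; rewrite -(sum_nat_indicator _ s_uniq s_enum) x_nbhd. Qed.

Lemma kernel_lower a : (a < h)%N -> x a = S.
Proof.
move=> a_lt; rewrite -(@sum_nbhd (a + h) [:: a]) ?big_seq1 //; first lia.
by move=> v; rewrite !inE /matching_star; lia.
Qed.

Lemma kernel_star a : (0 < a <= k)%N -> x (a + h) = 0.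
Proof.
move=> a_range; apply: (addIr S); rewrite add0r.
rewrite -{2}(@sum_nbhd a [:: a + h; 0%N]).
- by rewrite big_cons big_seq1 (@kernel_lower 0) //; lia.
- lia.
- by rewrite /= !inE; lia.
by move=> v; rewrite !inE /matching_star; lia.
Qed.

Lemma kernel_far a : (k < a < h)%N -> x (a + h) = S.
Proof.
move=> a_range; rewrite -(@sum_nbhd a [:: a + h]) ?big_seq1 //; first lia.
by move=> v; rewrite !inE /matching_star; lia.
Qed.

Lemma kernel_hub : x h + S *+ k = S.
Proof.
rewrite -[in RHS](@sum_nbhd 0 (h :: index_iota 1 k.+1)).
- rewrite big_cons (eq_big_nat _ _ (m := 1) (F2 := fun=> S)) ?sumr_const_nat ?subn1 //.
  by move=> i i_range; apply: kernel_lower; lia.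
- lia.
- by rewrite /= mem_index_iota iota_uniq; lia.
by move=> v; rewrite !inE mem_index_iota /matching_star; lia.
Qed.

Lemma kernel_sum_split : S = S *+ h + (x h + S *+ (h - k.+1)).
Proof.
have lower : \sum_(0 <= i < h) x i = S *+ h.
  rewrite (eq_big_nat _ _ (n := h) (F2 := fun=> S)) ?sumr_const_nat ?subn0 // => i.
  by move=> /andP[_]; apply: kernel_lower.
have star : \sum_(1 <= i < k.+1) x (i + h) = 0.
  by rewrite big_nat big1 // => i i_range; apply: kernel_star.
have far : \sum_(k.+1 <= i < h) x (i + h) = S *+ (h - k.+1).
  rewrite (eq_big_nat _ _ (m := k.+1) (F2 := fun=> S)) ?sumr_const_nat // => i i_range.
  by apply: kernel_far.
have upper : \sum_(h <= i < h + h) x i = x h + S *+ (h - k.+1).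
  rewrite -{1}(add0n h) big_addn addnK big_ltn; last lia.
  by rewrite (big_cat_nat _ (n := k.+1)) /= ?star ?far ?add0r //; lia.
by rewrite [LHS](big_cat_nat _ (n := h)) /= ?lower ?upper //; lia.
Qed.

Hypothesis odd_unit : ((h + h - 2 * k - 1)%N%:R : R) \is a GRing.unit.

Lemma kernel_sum_eq0 : S = 0.
Proof.
have cS : S *+ (h + h - 2 * k - 1) = 0.
  rewrite (_ : (h + h - 2 * k - 1 = h + (h - k.+1) - k)%N); last lia.
  rewrite mulrnBr; last lia.
  apply/eqP; rewrite subr_eq0 mulrnDr; apply/eqP/(addrI (x h)).
  by rewrite kernel_hub [RHS]kernel_sum_split addrCA.
by apply: (mulrI odd_unit); rewrite mulr0 mulr_natl.
Qed.

Lemma matching_star_kernel i : (i < h + h)%N -> x i = 0.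
Proof.
move=> i_lt; have S0 := kernel_sum_eq0.
have [i_lt_h | h_le_i] := ltnP i h; first by rewrite kernel_lower.
rewrite -(subnK h_le_i).
have [far | near] := ltnP k (i - h); first by rewrite kernel_far //; lia.
have [-> | pos] := posnP (i - h).
  by have := kernel_hub; rewrite S0 mul0rn addr0 add0n.
by rewrite kernel_star //; lia.
Qed.

End MatchingStarKernel.

Lemma matching_star_sym h k : symmetric (matching_star h k).
Proof. by move=> a b; rewrite /matching_star; lia. Qed.

Lemma matching_star_irr h k : 0 < h -> irreflexive (matching_star h k).
Proof. by move=> h_pos a; rewrite /matching_star; lia. Qed.

Definition cocktail_minus_star n h k : {set {set 'I_n}} :=
  complement_graph [rel u v : 'I_n | matching_star h k u v].

Lemma card_cocktail_minus_star m h k : m.+1 = h + h ->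
  'C(m.+1, 2) - (h + k) <= #|cocktail_minus_star m.+1 h k|.
Proof.
move=> hm.
pose F := [set [set (inord a : 'I_m.+1); inord (a + h)] | a : 'I_h] :|:
          [set [set (inord 0 : 'I_m.+1); inord a.+1] | a : 'I_k].
have card_F : #|F| <= h + k.
  rewrite cardsU (leq_trans (leq_subr _ _)) // leq_add //.
  - by rewrite (leq_trans (leq_imset_card _ _)) ?card_ord.
  - by rewrite (leq_trans (leq_imset_card _ _)) ?card_ord.
have oriented_cover (u v : 'I_m.+1) :
    (u + h == v) || (u == 0 :> nat) && (0 < v <= k) -> [set u; v] \in F.
  have v_lt := ltn_ord v; case/orP => uv; apply/setUP.
    have u_lt : u < h by lia.
    left; apply/imsetP; exists (Ordinal u_lt) => //.
    by congr [set _; _]; apply/val_inj; rewrite /= inordK //; lia.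
  have v_pred_lt : v.-1 < k by lia.
  right; apply/imsetP; exists (Ordinal v_pred_lt) => //.
  by congr [set _; _]; apply/val_inj; rewrite /= inordK //; lia.
have F_covers (u v : 'I_m.+1) : u != v -> matching_star h k u v -> [set u; v] \in F.
  by move=> _ /or4P[] uv; [| rewrite setUC | | rewrite setUC];
    apply: oriented_cover; rewrite uv ?orbT.
have R_sym : symmetric [rel u v : 'I_m.+1 | matching_star h k u v].
  by move=> ? ?; apply: matching_star_sym.
apply: leq_trans (card_complement_graph R_sym F_covers).
by rewrite card_ord leq_sub2l.
Qed.

Lemma cocktail_minus_star_toggle_kernel m p h k (t : {ffun 'I_m.+1 -> 'Z_p.+2}) :
  m.+1 = h + h -> k < h -> coprime p.+2 (h + h - 2 * k - 1) ->
  toggle (cocktail_minus_star m.+1 h k) t = 0%R -> t = 0%R.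
Proof.
move=> hm k_lt_h odd_coprime /ffunP t0.
have R_sym : symmetric [rel u v : 'I_m.+1 | matching_star h k u v].
  by move=> ? ?; apply: matching_star_sym.
have R_irr : irreflexive [rel u v : 'I_m.+1 | matching_star h k u v].
  by move=> ?; apply: matching_star_irr; lia.
pose x i := t (inord i).
have x_nbhd u : u < h + h -> (\sum_(0 <= v < h + h) x v * (matching_star h k u v)%:R =
                              \sum_(0 <= v < h + h) x v)%R.
  move=> u_lt; move: (t0 (inord u)); rewrite !ffunE.
  under eq_bigr do rewrite closed_nbhd_complement_graph //.
  rewrite sum_mul_negb => /eqP; rewrite subr_eq0 => /eqP t_sum.
  rewrite -hm !big_mkord /x; under eq_bigr do rewrite inord_val.
  under [RHS]eq_bigr do rewrite inord_val.
  by rewrite t_sum; apply: eq_bigr => v _; rewrite /= inordK // hm.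
apply/ffunP => v; rewrite ffunE -[v]inord_val.
apply: (matching_star_kernel k_lt_h x_nbhd); last by rewrite -hm.
by rewrite unitZpE.
Qed.

Theorem proposition4p5 (n l k : nat) :
  0 < n -> ~~ odd n -> 0 < l -> ~~ odd l ->
  gcdz (n%:Z - 2 * k%:Z - 1) l%:Z = 1%N ->
  (forall j : nat, (j < k)%N -> gcdz (n%:Z - 2 * j%:Z - 1) l%:Z <> 1%N) ->
  ('C(n, 2) - (n./2 + k) <= maxNAW n l)%N.
Proof.
case: n => [//|m] _ n_even; case: l => [|[|p]] // _ _ gcd_k k_min.
set h := m.+1./2.
have hm : m.+1 = h + h by rewrite /h; lia.
have k_lt_h : k < h.
  rewrite ltnNge; apply/negP => h_le_k; apply: (k_min h.-1); first lia.
  by rewrite (_ : _ - _ - 1 = 1)%R; [rewrite /gcdz gcd1n | lia].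
have odd_coprime : coprime p.+2 (h + h - 2 * k - 1).
  move: gcd_k; rewrite (_ : _ - _ - 1 = (h + h - 2 * k - 1)%N :> int)%R; last lia.
  by rewrite /coprime gcdnC => /(congr1 (@absz)) /= ->.
apply: leq_trans (card_cocktail_minus_star k hm) (leq_bigmax_cond _ _).
rewrite simple_complement_graph; apply: N_AW_of_toggle_kernel => t.
exact: cocktail_minus_star_toggle_kernel.
Qed.
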